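(* For any $d\in\mathbb{N}$ and positive integers $m_1,\dots,m_{2d}$, the matrix $\mathsf{C}\mathsf{W}(m_1,\dots,m_{2d})$ has five distinct positive real eigenvalues, namely $1$ and $$\frac{t+4s\pm\sqrt{(t+4s)^2-4}}{2},\qquad \frac{t\pm\sqrt{t^2-4}}{2},$$ where $t=\operatorname{tr}(W_1(m_1,\dots,m_{2d}))$ and $s=\operatorname{tr}^*(W_1(m_1,\dots,m_{2d}))$. Moreover $$\frac{t+4s+\sqrt{(t+4s)^2-4}}{2}>\frac{t+\sqrt{t^2-4}}{2}>1>\frac{t-\sqrt{t^2-4}}{2}>\frac{t+4s-\sqrt{(t+4s)^2-4}}{2}.$$
   Context: $A_1=\begin{pmatrix}1&1\\0&1\end{pmatrix}$, $B_1=\begin{pmatrix}1&0\\1&1\end{pmatrix}$, $W_1(m_1,\dots,m_{2d})=\prod_{i=1}^dA_1^{m_{2i-1}}B_1^{m_{2i}}$. With $\mathsf{A}=\begin{pmatrix}1&1&0&0&2\\0&1&0&0&0\\0&0&1&1&0\\0&0&0&1&0\\0&0&0&0&1\end{pmatrix}$, $\mathsf{B}=\begin{pmatrix}1&0&0&0&0\\1&1&0&0&0\\0&0&1&0&0\\0&0&1&1&2\\0&0&0&0&1\end{pmatrix}$, $\mathsf{C}=\begin{pmatrix}1&0&0&0&0\\0&1&0&0&0\\0&0&1&0&0\\0&0&0&1&0\\2&0&0&2&1\end{pmatrix}$, let $\mathsf{W}(m_1,\dots,m_{2d})=\prod_{i=1}^d\mathsf{A}^{m_{2i-1}}\mathsf{B}^{m_{2i}}$.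 $\operatorname{tr}^*(M)=M_{1,2}+M_{2,1}$ is the anti-trace. *)

From HB Require Import structures.
From mathcomp Require Import all_boot all_order all_algebra.
Set Implicit Arguments. Unset Strict Implicit. Unset Printing Implicit Defensive.
Import Order.TTheory GRing.Theory Num.Theory.
Local Open Scope ring_scope.

Definition mx_of_nat (R : pzRingType) (n : nat) (rows : seq (seq nat)) : 'M[R]_n :=
  \matrix_(i < n, j < n) (nth 0%N (nth [::] rows i) j)%:R.

Definition A1 (R : pzRingType) : 'M[R]_2 := mx_of_nat R 2 [:: [:: 1; 1]; [:: 0; 1]]%N.
Definition B1 (R : pzRingType) : 'M[R]_2 := mx_of_nat R 2 [:: [:: 1; 0]; [:: 1; 1]]%N.

Definition sA (R : pzRingType) : 'M[R]_5 := mx_of_nat R 5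
  [:: [:: 1; 1; 0; 0; 2];
      [:: 0; 1; 0; 0; 0];
      [:: 0; 0; 1; 1; 0];
      [:: 0; 0; 0; 1; 0];
      [:: 0; 0; 0; 0; 1]]%N.
Definition sB (R : pzRingType) : 'M[R]_5 := mx_of_nat R 5
  [:: [:: 1; 0; 0; 0; 0];
      [:: 1; 1; 0; 0; 0];
      [:: 0; 0; 1; 0; 0];
      [:: 0; 0; 1; 1; 2];
      [:: 0; 0; 0; 0; 1]]%N.
Definition sC (R : pzRingType) : 'M[R]_5 := mx_of_nat R 5
  [:: [:: 1; 0; 0; 0; 0];
      [:: 0; 1; 0; 0; 0];
      [:: 0; 0; 1; 0; 0];
      [:: 0; 0; 0; 1; 0];
      [:: 2; 0; 0; 2; 1]]%N.

(* The exponents m_1, ..., m_{2d} are m 1, ..., m (2d) (1-based, as in the paper).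
   W_1(m) = prod_{i=1}^d A1^{m_{2i-1}} B1^{m_{2i}}  (ordered product, left to right). *)
Definition W1 (R : pzRingType) (d : nat) (m : nat -> nat) : 'M[R]_2 :=
  \prod_(i < d) (A1 R ^+ m (2 * i).+1 * B1 R ^+ m (2 * i).+2).

Definition sW (R : pzRingType) (d : nat) (m : nat -> nat) : 'M[R]_5 :=
  \prod_(i < d) (sA R ^+ m (2 * i).+1 * sB R ^+ m (2 * i).+2).

Definition antitr (R : pzRingType) (M : 'M[R]_2) : R := M 0 1 + M 1 0.

From HB Require Import structures.
From mathcomp Require Import all_boot all_order all_algebra.
From mathcomp Require Import ring lra zify.
Import Order.TTheory GRing.Theory Num.Theory.
Local Open Scope ring_scope.

(* The five-dimensional matrices are images of the 2x2 ones under the map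
     Phi X = [[X, 0, 2 (X - 1) e_2], [0, X, 2 (X - 1) e_1], [0, 0, 1]],
   the affine conjugate of the block matrix diag(X, X, 1) by a translation;
   Phi is therefore multiplicative and unital.  Since sA = Phi A_1 and
   sB = Phi B_1, we get sW(m) = Phi (W_1(m)).  A cofactor expansion shows
     det (x - C Phi X) = (x - 1) (x^2 - tr X x + det X)
                                 (x^2 - (tr X + 4 tr^* X) x + det X).
   For positive exponents W_1(m) has det 1, its (1,1) entry is >= 2 and its
   other entries are >= 1, so t > 2 and s > 0.  The reciprocal quadratics
   x^2 - u x + 1 with u > 2 have the two positive roots
   hi u = (u + sqrt(u^2 - 4))/2 > 1 > lo u = 1 / hi u, and hi is increasing
   in u; this yields all the claims with u = t and u = t + 4 s. *)

Definition mx_rows (R : pzRingType) n (rows : seq (seq R)) : 'M[R]_n :=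
  \matrix_(i < n, j < n) nth 0 (nth [::] rows i) j.
Arguments mx_rows {R} n rows.

Fixpoint drop_col {T : Type} (j : nat) (r : seq T) : seq T :=
  match r, j with
  | [::], _ => [::]
  | _ :: r', 0%N => r'
  | x :: r', j'.+1 => x :: drop_col j' r'
  end.

Lemma nth_drop_col (T : Type) (x0 : T) j r k :
  nth x0 (drop_col j r) k = nth x0 r (bump j k).
Proof.
elim: r j k => [|x r IH] [|j] k /=; rewrite ?nth_nil ?add0n //.
by case: k => [|k] //=; rewrite IH /bump /= addnS.
Qed.

(* Laplace expansion along the first row, in a form that computes on
   explicit row lists: the minors are again matrices given by rows. *)
Lemma det_mx_rows (R : comNzRingType) n (rows : seq (seq R)) :
  \det (mx_rows n.+1 rows) = \sum_(j <- iota 0 n.+1)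
     nth 0 (nth [::] rows 0) j *
     ((-1) ^+ j * \det (mx_rows n (map (drop_col j) (behead rows)))).
Proof.
rewrite (expand_det_row _ ord0) -[iota 0 n.+1]/(index_iota 0 n.+1) big_mkord.
apply: eq_bigr => j _; rewrite mxE /cofactor /= add0n; congr (_ * (_ * \det _)).
apply/matrixP => k l; rewrite !mxE /=.
case: rows => [|r rows] /=; first by rewrite !nth_nil.
have [klt|kge] := ltnP k (size rows); first by rewrite (nth_map [::]) // nth_drop_col.
by rewrite !nth_default ?size_map // nth_nil.
Qed.

Ltac cases2 i j := case: i => [[|[|i]] Hi] //; case: j => [[|[|j]] Hj] //.
Ltac cases5 i j :=
  case: i => [[|[|[|[|[|i]]]]] Hi] //; case: j => [[|[|[|[|[|j]]]]] Hj] //.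

Lemma mul_mx2E (R : pzRingType) (X Y : 'M[R]_2) i j :
  (X * Y) i j = X i 0 * Y 0 j + X i 1 * Y 1 j.
Proof.
rewrite !mxE !big_ord_recl big_ord0 addr0.
by congr (X i _ * Y _ j + X i _ * Y _ j); apply: val_inj.
Qed.

Lemma tr_mx2 (R : pzRingType) (X : 'M[R]_2) : \tr X = X 0 0 + X 1 1.
Proof.
rewrite /mxtrace !big_ord_recl big_ord0 addr0.
by congr (X _ _ + X _ _); apply: val_inj.
Qed.

Lemma det_mx2 (R : comNzRingType) (X : 'M[R]_2) :
  \det X = X 0 0 * X 1 1 - X 0 1 * X 1 0.
Proof.
have XE : X = mx_rows 2 [:: [:: X 0 0; X 0 1]; [:: X 1 0; X 1 1]].
  by apply/matrixP => i j; rewrite mxE; cases2 i j; congr (X _ _); apply: val_inj.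
rewrite {1}XE.
repeat rewrite det_mx_rows /= !big_cons big_nil.
by repeat rewrite det_mx00 /=; ring.
Qed.

Definition Phi {R : pzRingType} (X : 'M[R]_2) : 'M[R]_5 := mx_rows 5
  [:: [:: X 0 0; X 0 1; 0; 0; 2 * X 0 1];
      [:: X 1 0; X 1 1; 0; 0; 2 * X 1 1 - 2];
      [:: 0; 0; X 0 0; X 0 1; 2 * X 0 0 - 2];
      [:: 0; 0; X 1 0; X 1 1; 2 * X 1 0];
      [:: 0; 0; 0; 0; 1]].

Lemma PhiM (R : comNzRingType) (X Y : 'M[R]_2) : Phi (X * Y) = Phi X * Phi Y.
Proof.
apply/matrixP => i j; rewrite /Phi !mul_mx2E !mxE !big_ord_recr big_ord0 /= !mxE.
by cases5 i j; rewrite /=; ring.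
Qed.

Lemma Phi1 (R : comNzRingType) : Phi (1 : 'M[R]_2) = 1.
Proof. by apply/matrixP => i j; rewrite !mxE; cases5 i j; rewrite /=; ring. Qed.

Lemma PhiX (R : comNzRingType) (X : 'M[R]_2) n : Phi (X ^+ n) = Phi X ^+ n.
Proof. by elim: n => [|n IH]; rewrite ?expr0 ?Phi1 // !exprS PhiM IH. Qed.

Lemma sA_Phi (R : comNzRingType) : sA R = Phi (A1 R).
Proof. by apply/matrixP => i j; rewrite !mxE; cases5 i j; rewrite /= ?mulr1; ring. Qed.

Lemma sB_Phi (R : comNzRingType) : sB R = Phi (B1 R).
Proof. by apply/matrixP => i j; rewrite !mxE; cases5 i j; rewrite /= ?mulr1; ring. Qed.

Lemma sW_Phi (R : comNzRingType) d m : sW R d m = Phi (W1 R d m).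
Proof.
rewrite /sW /W1 (big_morph _ (@PhiM R) (@Phi1 R)); apply: eq_bigr => i _.
by rewrite PhiM !PhiX -sA_Phi -sB_Phi.
Qed.

Lemma det_char_CPhi (R : comNzRingType) (X : 'M[R]_2) (x : R) :
  \det (x%:M - sC R * Phi X) =
  (x - 1) * (x ^+ 2 - \tr X * x + \det X) *
  (x ^+ 2 - (\tr X + 4 * antitr X) * x + \det X).
Proof.
rewrite det_mx2 tr_mx2 /antitr /Phi.
move: (X 0 0) (X 0 1) (X 1 0) (X 1 1) => a b c e.
have -> : x%:M - sC R * mx_rows 5
  [:: [:: a; b; 0; 0; 2 * b]; [:: c; e; 0; 0; 2 * e - 2];
      [:: 0; 0; a; b; 2 * a - 2]; [:: 0; 0; c; e; 2 * c]; [:: 0; 0; 0; 0; 1]] =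
  mx_rows 5
  [:: [:: x - a; - b; 0; 0; - (2 * b)];
      [:: - c; x - e; 0; 0; - (2 * e - 2)];
      [:: 0; 0; x - a; - b; - (2 * a - 2)];
      [:: 0; 0; - c; x - e; - (2 * c)];
      [:: - (2 * a); - (2 * b); - (2 * c); - (2 * e); x - (1 + 4 * b + 4 * c)]].
  apply/matrixP => i j; rewrite !mxE !big_ord_recr big_ord0 /= !mxE.
  by cases5 i j; rewrite /=; ring.
repeat rewrite det_mx_rows /= !big_cons big_nil ?mul0r ?add0r ?addr0.
by repeat rewrite det_mx00 /=; ring.
Qed.

Lemma eigenvalue_det (F : fieldType) n (A : 'M[F]_n) a :
  eigenvalue A a = (\det (a%:M - A) == 0).
Proof.
apply/eigenvalueP/det0P => [[v Av_av v_nz] | [v v_nz Av_av]]; exists v => //.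
  by rewrite mulmxBr Av_av mul_mx_scalar subrr.
by apply/eqP; rewrite -mul_mx_scalar eq_sym -subr_eq0 -mulmxBr Av_av.
Qed.

Lemma A1_exp (R : pzRingType) n : A1 R ^+ n = mx_rows 2 [:: [:: 1; n%:R]; [:: 0; 1]].
Proof.
elim: n => [|n IH]; apply/matrixP => i j; first by rewrite expr0 !mxE; cases2 i j.
by rewrite exprSr mul_mx2E IH !mxE; cases2 i j;
  rewrite /= ?(mulr0n, mulr1n, mul1r, mulr1, mulr0, mul0r, addr0, add0r) ?mulrS.
Qed.

Lemma B1_exp (R : pzRingType) n : B1 R ^+ n = mx_rows 2 [:: [:: 1; 0]; [:: n%:R; 1]].
Proof.
elim: n => [|n IH]; apply/matrixP => i j; first by rewrite expr0 !mxE; cases2 i j.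
by rewrite exprSr mul_mx2E IH !mxE; cases2 i j;
  rewrite /= ?(mulr0n, mulr1n, mul1r, mulr1, mulr0, mul0r, addr0, add0r) ?mulrS // addrC.
Qed.

(* Unimodular matrices with entries bounded below as in A_1^p B_1^q, p, q > 0;
   this class is closed under products. *)
Definition pos_unimodular {R : realDomainType} (X : 'M[R]_2) : Prop :=
  [/\ 2 <= X 0 0, 1 <= X 0 1, 1 <= X 1 0, 1 <= X 1 1 & \det X = 1].

Lemma pos_unimodularM (R : realDomainType) (X Y : 'M[R]_2) :
  pos_unimodular X -> pos_unimodular Y -> pos_unimodular (X * Y).
Proof.
move=> [a_ge2 b_ge1 c_ge1 e_ge1 detX] [a'_ge2 b'_ge1 c'_ge1 e'_ge1 detY].
split; rewrite ?mul_mx2E; try nra.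
by rewrite -[X * Y]/(X *m Y) det_mulmx detX detY mulr1.
Qed.

(* The building blocks A_1^p B_1^q = [[1 + p q, p], [q, 1]] of W_1. *)
Lemma pos_unimodular_gen (R : realDomainType) (p q : nat) :
  (0 < p)%N -> (0 < q)%N -> pos_unimodular (A1 R ^+ p * B1 R ^+ q).
Proof.
move=> p_gt0 q_gt0.
have p_ge1 : 1 <= p%:R :> R by rewrite ler1n.
have q_ge1 : 1 <= q%:R :> R by rewrite ler1n.
by split; rewrite ?det_mx2 !mul_mx2E A1_exp B1_exp !mxE /=; nra.
Qed.

Lemma pos_unimodular_prod (R : realDomainType) n (F : 'I_n.+1 -> 'M[R]_2) :
  (forall i, pos_unimodular (F i)) -> pos_unimodular (\prod_i F i).
Proof.
elim: n F => [|n IH] F posF; first by rewrite big_ord1.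
by rewrite big_ord_recr; apply: pos_unimodularM; [apply: IH => i|].
Qed.

Lemma pos_unimodular_W1 (R : realDomainType) d (m : nat -> nat) : (0 < d)%N ->
  (forall k, (1 <= k <= 2 * d)%N -> (0 < m k)%N) -> pos_unimodular (W1 R d m).
Proof.
case: d => // d _ m_gt0; apply: pos_unimodular_prod => i.
by apply: pos_unimodular_gen; apply: m_gt0; have := ltn_ord i; lia.
Qed.

Section ReciprocalQuadratic.
Context {R : rcfType}.
Implicit Types u v x : R.

Definition hi_root u := (u + Num.sqrt (u ^+ 2 - 4)) / 2.
Definition lo_root u := (u - Num.sqrt (u ^+ 2 - 4)) / 2.

Lemma sqr_sqrt_disc {u} : 2 <= u -> Num.sqrt (u ^+ 2 - 4) ^+ 2 = u ^+ 2 - 4.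
Proof. by move=> u_ge2; rewrite sqr_sqrtr //; nra. Qed.

Lemma reciprocal_factor {u} x : 2 <= u ->
  x ^+ 2 - u * x + 1 = (x - hi_root u) * (x - lo_root u).
Proof. by move=> /sqr_sqrt_disc; rewrite /hi_root /lo_root; nra. Qed.

Lemma reciprocal_root_eq0 {u} x : 2 <= u ->
  (x ^+ 2 - u * x + 1 == 0) = (x == hi_root u) || (x == lo_root u).
Proof. by move=> /reciprocal_factor->; rewrite mulf_eq0 !subr_eq0. Qed.

Lemma hi_lo_root {u} : 2 <= u -> hi_root u * lo_root u = 1.
Proof.
move=> /(reciprocal_factor 0).
by rewrite expr0n mulr0 subr0 add0r !sub0r mulrNN => <-.
Qed.

Lemma hi_root_gt1 {u} : 2 < u -> 1 < hi_root u.
Proof.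
by move=> u_gt2; have := sqrtr_ge0 (u ^+ 2 - 4); rewrite /hi_root; lra.
Qed.

Lemma lo_root_bounds {u} : 2 < u -> 0 < lo_root u < 1.
Proof.
move=> u_gt2; have hi_gt1 := hi_root_gt1 u_gt2.
have /eqP prod1 := hi_lo_root (ltW u_gt2).
apply/andP; split; nra.
Qed.

(* hi_root is increasing, hence lo_root = 1 / hi_root is decreasing. *)
Lemma hi_root_lt {u v} : 2 <= u -> u < v -> hi_root u < hi_root v.
Proof.
move=> u_ge2 uv; rewrite /hi_root.
have : Num.sqrt (u ^+ 2 - 4) <= Num.sqrt (v ^+ 2 - 4) by rewrite ler_sqrt; nra.
lra.
Qed.

Lemma lo_root_lt {u v} : 2 < u -> u < v -> lo_root v < lo_root u.
Proof.
move=> u_gt2 uv; have v_gt2 : 2 < v by lra.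
have := hi_root_lt (ltW u_gt2) uv.
have := hi_lo_root (ltW u_gt2); have := hi_lo_root (ltW v_gt2).
have := hi_root_gt1 v_gt2.
have /andP[lou_gt0 _] := lo_root_bounds u_gt2.
nra.
Qed.

End ReciprocalQuadratic.

Theorem mainTheorem12 (R : rcfType) (d : nat) (m : nat -> nat) :
  (0 < d)%N ->
  (forall k, (1 <= k <= 2 * d)%N -> (0 < m k)%N) ->
  let t := \tr (W1 R d m) in
  let s := antitr (W1 R d m) in
  let l1 := (t + 4 * s + Num.sqrt ((t + 4 * s) ^+ 2 - 4)) / 2 in
  let l2 := (t + Num.sqrt (t ^+ 2 - 4)) / 2 in
  let l4 := (t - Num.sqrt (t ^+ 2 - 4)) / 2 in
  let l5 := (t + 4 * s - Num.sqrt ((t + 4 * s) ^+ 2 - 4)) / 2 in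
  [/\ (forall a : R, eigenvalue (sC R * sW R d m) a <-> a \in [:: l1; l2; 1; l4; l5]),
      uniq [:: l1; l2; 1; l4; l5],
      all (fun x => 0 < x) [:: l1; l2; 1; l4; l5],
      0 <= (t + 4 * s) ^+ 2 - 4 /\ 0 <= t ^+ 2 - 4
    & l1 > l2 /\ l2 > 1 /\ 1 > l4 /\ l4 > l5].
Proof.
move=> d_gt0 m_gt0 t s l1 l2 l4 l5.
have [a_ge2 b_ge1 c_ge1 e_ge1 detW] := pos_unimodular_W1 R d m d_gt0 m_gt0.
have t_gt2 : 2 < t by rewrite /t tr_mx2; lra.
have u_gt2 : 2 < t + 4 * s by rewrite /s /antitr; lra.
have t_lt_u : t < t + 4 * s by rewrite /s /antitr; lra.
rewrite /l1 /l2 /l4 /l5 -/(hi_root t) -/(lo_root t).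
rewrite -/(hi_root (t + 4 * s)) -/(lo_root (t + 4 * s)).
have /andP[lou_gt0 _] := lo_root_bounds u_gt2.
have /andP[_ lot_lt1] := lo_root_bounds t_gt2.
have hit_gt1 := hi_root_gt1 t_gt2.
have hi_lt := hi_root_lt (ltW t_gt2) t_lt_u.
have lo_lt := lo_root_lt t_gt2 t_lt_u.
split; [move=> x | | rewrite /=; lra | split; nra | lra].
- rewrite eigenvalue_det sW_Phi det_char_CPhi detW -/t -/s !mulf_eq0 subr_eq0.
  rewrite (reciprocal_root_eq0 _ (ltW t_gt2)) (reciprocal_root_eq0 _ (ltW u_gt2)) !inE.
  by case: (x == 1); case: (x == hi_root t); case: (x == lo_root t);
     case: (x == hi_root (t + 4 * s)); case: (x == lo_root (t + 4 * s)).
- apply: (sorted_uniq (leT := fun x y => y < x)); last by rewrite /=; lra.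
    by move=> y x z xy yz; apply: lt_trans yz xy.
  exact: ltxx.
Qed.
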